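(* Let $k$ be a field and let $A$ be a $k$-algebra with filtration $A_0\subseteq A_1\subseteq\cdots$ (subspaces with $\bigcup_nA_n=A$ and $A_iA_j\subseteq A_{i+j}$). Let $R=\bigoplus_{n\ge0}x^nA_n\subseteq A[x]$ be the Rees algebra. Let $a(x)=a_1x+\cdots+a_mx^m\in R$ with $a_i\in A_i$, and suppose $a(x)$ is integral over $k[x]$. Then $a(x)^N\in xR$ for some $N\ge0$.
   Context: $A$ is associative with unit, $A[x]$ is the polynomial algebra over $A$ in a central indeterminate $x$, and $k[x]\subseteq A[x]$ via $k\subseteq A$. An element $a(x)\in A[x]$ is integral over $k[x]$ if $a(x)^n+p_{n-1}(x)a(x)^{n-1}+\cdots+p_0(x)=0$ for some $n\ge1$ and $p_i(x)\in k[x]$. Here $xR=\bigoplus_{n\ge1}x^nA_{n-1}$. *)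

From HB Require Import structures.
From mathcomp Require Import all_boot all_order all_algebra.
Set Implicit Arguments. Unset Strict Implicit. Unset Printing Implicit Defensive.
Import GRing.Theory.
Local Open Scope ring_scope.

Definition is_filtration (k : fieldType) (A : algType k) (F : nat -> {pred A}) : Prop :=
  [/\ (forall n, 0 \in F n /\
        forall (c : k) (u v : A), u \in F n -> v \in F n -> c *: u + v \in F n),
      (forall n, {subset F n <= F n.+1}),
      (forall a : A, exists n, a \in F n) &
      (forall i j (u v : A), u \in F i -> v \in F j -> u * v \in F (i + j)%N)].

Definition in_rees (k : fieldType) (A : algType k) (F : nat -> {pred A}) (p : {poly A}) : Prop :=
  forall n, p`_n \in F n.

(* xR = ⊕_{n>=1} x^n A_{n-1} *)
Definition in_xR (k : fieldType) (A : algType k) (F : nat -> {pred A}) (p : {poly A}) : Prop :=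
  p`_0 = 0 /\ forall n, p`_n.+1 \in F n.

Definition kx_in (k : fieldType) (A : algType k) (q : {poly k}) : {poly A} :=
  map_poly (fun c : k => c%:A) q.

Definition integral_over_kx (k : fieldType) (A : algType k) (a : {poly A}) : Prop :=
  exists (n : nat) (p : nat -> {poly k}),
    (0 < n)%N /\ a ^+ n + \sum_(i < n) kx_in A (p i) * a ^+ i = 0.

(* Multiply the integral relation by [a], so that only powers [a ^+ i.+1] occur:
   these have zero constant term, and the Rees algebra [R] need not contain [1].
   Let [j] be the least index whose coefficient [q_j] has a nonzero constant
   term [c]. Modulo [xR], the terms below [j] and [(q_j - c) a^(j+1)] vanish, so
   [b := a^(j+1)] satisfies [b = s b mod xR] for some [s] in [R] without
   constant term. Hence [b = s^m b mod xR] for all [m], and since [s^m b]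
   vanishes below degree [m], every coefficient of [b] is that of an element
   of [xR]. *)

From HB Require Import structures.
From mathcomp Require Import all_boot all_order all_algebra zify.
Set Implicit Arguments. Unset Strict Implicit. Unset Printing Implicit Defensive.
Import GRing.Theory.
Local Open Scope ring_scope.

HB.instance Definition _ (k : fieldType) (A : algType k) :=
  GRing.RMorphism.copy (kx_in A) (map_poly (in_alg A)).

Section ReesModules.
Variables (k : fieldType) (A : algType k).

Definition subspace_family (G : nat -> {pred A}) : Prop :=
  forall n, 0 \in G n /\
    forall (c : k) (u v : A), u \in G n -> v \in G n -> c *: u + v \in G n.

Definition increasing_family (G : nat -> {pred A}) : Prop :=
  forall n, {subset G n <= G n.+1}.

Definition mul_family (G H K : nat -> {pred A}) : Prop :=
  forall i j (u v : A), u \in G i -> v \in H j -> u * v \in K (i + j)%N.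

Section SubspaceFamily.
Variable G : nat -> {pred A}.
Hypothesis subG : subspace_family G.

Lemma subspace0 n : 0 \in G n.
Proof. by case: (subG n). Qed.

Lemma subspaceZD n c u v : u \in G n -> v \in G n -> c *: u + v \in G n.
Proof. by case: (subG n) => _; apply. Qed.

Lemma subspaceD n u v : u \in G n -> v \in G n -> u + v \in G n.
Proof. by move=> Gu Gv; rewrite -[u]scale1r subspaceZD. Qed.

Lemma subspaceZ n c u : u \in G n -> c *: u \in G n.
Proof. by move=> Gu; rewrite -[_ *: _]addr0 subspaceZD ?subspace0. Qed.

Lemma subspace_sum n (I : Type) (r : seq I) (P : pred I) (f : I -> A) :
  (forall i, P i -> f i \in G n) -> \sum_(i <- r | P i) f i \in G n.
Proof.
by move=> Gf; apply: (big_ind (fun u => u \in G n)) => //;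
  [apply: subspace0 | apply: subspaceD].
Qed.

Lemma increasing_le (incG : increasing_family G) m n u :
  (m <= n)%N -> u \in G m -> u \in G n.
Proof. by move=> /subnK <-; elim: (n - m)%N => // d IH /IH; apply: incG. Qed.

Lemma in_rees0 : in_rees G 0.
Proof. by move=> n; rewrite coef0 subspace0. Qed.

Lemma in_reesD p q : in_rees G p -> in_rees G q -> in_rees G (p + q).
Proof. by move=> Gp Gq n; rewrite coefD subspaceD. Qed.

Lemma in_rees_sum (I : Type) (r : seq I) (P : pred I) (f : I -> {poly A}) :
  (forall i, P i -> in_rees G (f i)) -> in_rees G (\sum_(i <- r | P i) f i).
Proof. by move=> Gf n; rewrite coef_sum subspace_sum // => i /Gf. Qed.

End SubspaceFamily.

Lemma in_reesM G H K p q : subspace_family K -> mul_family G H K ->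
  in_rees G p -> in_rees H q -> in_rees K (p * q).
Proof.
move=> subK mulGHK Gp Hq n; rewrite coefM subspace_sum // => -[i /= lt_i_n] _.
by have := mulGHK _ _ _ _ (Gp i) (Hq (n - i)%N); rewrite subnKC.
Qed.

Lemma in_reesX G p m : subspace_family G -> mul_family G G G ->
  in_rees G p -> in_rees G (p ^+ m.+1).
Proof.
move=> subG mulG Gp; elim: m => [|m IH]; first by rewrite expr1.
by rewrite exprS; apply: (in_reesM subG mulG).
Qed.

Lemma coef_kx_inM q p d :
  (kx_in A q * p)`_d = \sum_(i < d.+1) q`_i *: p`_(d - i).
Proof.
rewrite coefM; apply: eq_bigr => i _.
by rewrite coef_map_id0 ?scale0r // mulr_algl.
Qed.

Lemma coef0_kx_inM q p : (kx_in A q * p)`_0 = q`_0 *: p`_0.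
Proof. by rewrite coef_kx_inM big_ord1. Qed.

Lemma in_rees_kx_inM G : subspace_family G -> increasing_family G ->
  forall q p, in_rees G p -> in_rees G (kx_in A q * p).
Proof.
move=> subG incG q p Gp n; rewrite coef_kx_inM subspace_sum // => i _.
by rewrite subspaceZ // (increasing_le incG (leq_subr i n)).
Qed.

Lemma integral_relation a : integral_over_kx a ->
  exists n (q : nat -> {poly k}),
    (q n)`_0 != 0 /\ \sum_(i < n.+1) kx_in A (q i) * a ^+ i.+1 = 0.
Proof.
move=> [n [p [_ rel]]]; exists n, (fun i => if (i < n)%N then p i else 1).
rewrite ltnn coefC eqxx oner_neq0; split=> //.
rewrite big_ord_recr /= ltnn rmorph1 mul1r.
transitivity ((a ^+ n + \sum_(i < n) kx_in A (p i) * a ^+ i) * a).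
  rewrite mulrDl mulr_suml addrC -exprSr; congr (_ + _).
  by apply: eq_bigr => i _; rewrite ltn_ord -mulrA -exprSr.
by rewrite rel mul0r.
Qed.

End ReesModules.

Lemma sum_ord_split_at (V : nmodType) (f : nat -> V) n j : (j <= n)%N ->
  \sum_(i < n.+1) f i =
    \sum_(i < j) f i + (f j + \sum_(i < n - j) f (i + j.+1)%N).
Proof.
move=> le_jn; rewrite -(big_mkord xpredT f) (big_cat_nat (leq0n j) (leqW le_jn)).
by rewrite big_mkord big_ltn ?ltnS // -{1}[j.+1]add0n big_addn subSS big_mkord.
Qed.

Lemma coef_exprM_lt (R : nzRingType) (s b : {poly R}) m d :
  s`_0 = 0 -> (d < m)%N -> (s ^+ m * b)`_d = 0.
Proof.
move=> s0; elim: m d => // m IH d lt_d_m.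
rewrite exprS -mulrA coefM big_ord_recl s0 mul0r add0r big1 // => i _.
by rewrite IH ?mulr0 //; have := ltn_ord i; rewrite /= /bump leq0n; lia.
Qed.

Section ReesAlgebra.
Variables (k : fieldType) (A : algType k) (F : nat -> {pred A}).
Hypothesis filtF : is_filtration F.

Definition xF (n : nat) : {pred A} := if n is m.+1 then F m else pred1 0.

Lemma in_xRE p : in_xR F p <-> in_rees xF p.
Proof.
split=> [[p0 Fp] [|n] /=|xFp]; rewrite ?inE ?p0 //.
by split=> [|n]; [apply/eqP; apply: (xFp 0%N) | apply: (xFp n.+1)].
Qed.

Lemma filtration_subspace : subspace_family F.
Proof. by case: filtF. Qed.

Lemma filtration_increasing : increasing_family F.
Proof. by case: filtF. Qed.

Lemma filtration_mul : mul_family F F F.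
Proof. by case: filtF. Qed.

Lemma xF_subspace : subspace_family xF.
Proof.
case=> [|n]; last exact: filtration_subspace.
by split=> [|c u v]; rewrite !inE // => /eqP-> /eqP->; rewrite scaler0 addr0.
Qed.

Lemma xF_increasing : increasing_family xF.
Proof.
case=> [u /eqP->|n]; first exact: (subspace0 filtration_subspace).
exact: filtration_increasing.
Qed.

Lemma filtration_xF_mul : mul_family F xF xF.
Proof.
move=> i [|j] u v Fu; rewrite ?inE.
  by move=> /eqP->; rewrite mulr0 (subspace0 xF_subspace).
by move=> Fv; rewrite addnS; apply: filtration_mul.
Qed.

Lemma in_rees_xF_kx_inM (q : {poly k}) p :
  q`_0 = 0 -> in_rees F p -> in_rees xF (kx_in A q * p).
Proof.
move=> q0 Fp [|n]; first by rewrite coef0_kx_inM q0 scale0r inE.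
rewrite /= coef_kx_inM big_ord_recl q0 scale0r add0r.
rewrite (subspace_sum filtration_subspace) // => i _; rewrite subSS.
apply/(subspaceZ filtration_subspace).
exact: increasing_le filtration_increasing _ _ _ (leq_subr i n) (Fp _).
Qed.

Lemma in_rees_xF_fixpoint s b : in_rees F s -> s`_0 = 0 ->
  in_rees xF (b - s * b) -> in_rees xF b.
Proof.
move=> Fs s0 xFb n.
have xF_pow m : in_rees xF (b - s ^+ m * b).
  elim: m => [|m IH]; first by rewrite mul1r subrr; apply: in_rees0 xF_subspace.
  have -> : b - s ^+ m.+1 * b = (b - s * b) + s * (b - s ^+ m * b).
    by rewrite mulrBr mulrA -exprS addrA subrK.
  apply: in_reesD xF_subspace _ _ xFb _.
  exact: in_reesM xF_subspace filtration_xF_mul Fs IH.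
by have := xF_pow n.+1 n; rewrite coefB coef_exprM_lt ?subr0.
Qed.

Lemma relation_exp_in_xR (a : {poly A}) (q : nat -> {poly k}) n j :
  in_rees F a -> a`_0 = 0 -> (j <= n)%N ->
  (forall i, (i < j)%N -> (q i)`_0 = 0) -> (q j)`_0 != 0 ->
  \sum_(i < n.+1) kx_in A (q i) * a ^+ i.+1 = 0 ->
  in_rees xF (a ^+ j.+1).
Proof.
move=> Fa a0 le_jn q0 cj0 rel.
set c := (q j)`_0 in cj0; set b := a ^+ j.+1.
have Fexp m : in_rees F (a ^+ m.+1).
  exact: in_reesX filtration_subspace filtration_mul Fa.
have exp0 m : (a ^+ m.+1)`_0 = 0 by rewrite exprS coef0M a0 mul0r.
pose low := \sum_(i < j) kx_in A (q i) * a ^+ i.+1.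
pose S := \sum_(i < n - j) kx_in A (q (i + j.+1)%N) * a ^+ i.+1.
have relS : S * b = - (low + kx_in A (q j) * b).
  move: rel.
  rewrite (sum_ord_split_at (fun i => kx_in A (q i) * a ^+ i.+1) le_jn).
  move=> /eqP; rewrite addrA addrC addr_eq0 => /eqP <-; rewrite mulr_suml.
  by apply: eq_bigr => i _; rewrite -mulrA -exprD addSn.
pose s := kx_in A (- c^-1)%:P * S.
apply: (@in_rees_xF_fixpoint s).
- have kxF := in_rees_kx_inM filtration_subspace filtration_increasing.
  by apply/kxF/(in_rees_sum filtration_subspace) => i _; apply/kxF/Fexp.
- rewrite /s coef0_kx_inM coef_sum big1 ?scaler0 // => i _.
  by rewrite coef0_kx_inM exp0 scaler0.
have kxcK : kx_in A (- c^-1)%:P * kx_in A c%:P = -1.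
  by rewrite -rmorphM -polyCM mulNr mulVf // !rmorphN !rmorph1.
have -> : b - s * b = kx_in A (- c^-1)%:P * (kx_in A (q j - c%:P) * b + low).
  rewrite /s -mulrA relS rmorphB mulrBl mulrDr mulrBr.
  rewrite (mulrA _ (kx_in A c%:P)) kxcK.
  by rewrite mulN1r opprK mulrN opprK mulrDr [RHS]addrAC addrC (addrC (_ * low)).
apply: (in_rees_kx_inM xF_subspace xF_increasing).
apply: (in_reesD xF_subspace).
  by apply: in_rees_xF_kx_inM; [rewrite coefB coefC eqxx subrr | apply: Fexp].
apply: (in_rees_sum xF_subspace) => i _.
exact: in_rees_xF_kx_inM (q0 i (ltn_ord i)) (Fexp i).
Qed.

End ReesAlgebra.

Theorem lemma5p2 (k : fieldType) (A : algType k) (F : nat -> {pred A})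
  (a : {poly A}) :
  is_filtration F ->
  a`_0 = 0 -> (forall i, a`_i \in F i) ->
  integral_over_kx a ->
  exists N : nat, in_xR F (a ^+ N).
Proof.
move=> filtF a0 Fa /integral_relation[n [q [qn0 rel]]].
have lowest_j : exists i, (i <= n)%N && ((q i)`_0 != 0).
  by exists n; rewrite leqnn.
case: (ex_minnP lowest_j) => j /andP[le_jn qj0] min_j.
exists j.+1; apply/in_xRE.
apply: (relation_exp_in_xR filtF Fa a0 le_jn _ qj0 rel) => i lt_ij.
apply/eqP/negPn/negP => qi0; have := min_j i.
by rewrite qi0 andbT (leq_trans (ltnW lt_ij) le_jn) leqNgt lt_ij => /(_ isT).
Qed.
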